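(* Let $B$ be a catacondensed flat hexagonal complex (equivalently, a catacondensed chemical hexagonal complex). Then $B$ is Kekulean, i.e. the skeleton graph of $B$ has a perfect matching.
   Context: Polygonal complexes are described by schemes. Fix a finite alphabet $A$; each symbol $a\in A$ has two literals $a^+$ and $a^-$, each the inverse of the other. A word is a cyclic sequence of literals and represents an oriented polygon whose sides are labelled by the literals in order; a scheme is a finite list of words and represents the polygonal complex obtained by taking one polygon per word and gluing together all sides that carry the same symbol. The gluing is parallel if the two occurrences have the same exponent and antiparallel otherwise. Two schemes represent the same complex if one is obtained from the other by permuting words, cyclically rotating a word, renaming symbols, inverting all occurrences of one symbol, or reversing a word while inverting all of its literals. The skeleton graph of the complex has the edges (symbols) and the vertices (corners of polygons, after gluing) as its edges and vertices. A scheme/complex is: - connected, if it cannot be split into two nonempty subschemes with no symbol in common; - flat, if each symbol occurs at most twice, i.e. every edge lies in at most two polygons; - hexagonal, if every word has exactly six literals; - catacondensed, if whenever two literals $a,b$ occur consecutively in some word, at least one of the symbols $a,b$ occurs only once in the scheme (geometrically, no vertex belongs to three hexagons, so each vertex lies in at most two hexagonal faces). A catacondensed flat hexagonal complex is a connected, flat, hexagonal, catacondensed scheme. Its skeleton then has maximum degree at most $3$. The complex need not be planar or orientable; for example it may contain untwisted cyclacene or Möbius (twisted) cyclacene rings, and it may determine a surface with boundary of any genus. A complex is Kekulean if its skeleton graph admits a perfect matching (a Kekulé structure). *)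

From mathcomp Require Import all_boot.
Unset Printing Implicit Defensive.

(* A literal: (symbol, exponent), exponent true = a^+ , false = a^-. *)
Definition literal := (nat * bool)%type.
(* A word: cyclic sequence of literals (listed from a chosen starting point). *)
Definition word := seq literal.
Definition scheme := seq word.

Definition sym_count (S : scheme) (a : nat) : nat :=
  sumn [seq count (fun l : literal => l.1 == a) w | w <- S].

Definition syms (S : scheme) : seq nat := flatten [seq [seq l.1 | l <- w] | w <- S].

(* connected: no splitting of the words into two nonempty subschemes
   without a common symbol. *)
Definition connected_scheme (S : scheme) : Prop :=
  forall m : bitseq, size m = size S ->
    mask m S != [::] -> mask (map negb m) S != [::] ->
    has (fun a => a \in syms (mask (map negb m) S)) (syms (mask m S)).

Definition flat (S : scheme) : Prop := forall a, sym_count S a <= 2.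

Definition hexagonal (S : scheme) : Prop := all (fun w : word => size w == 6) S.

Definition catacondensed (S : scheme) : Prop :=
  forall w, w \in S -> forall i, i < size w ->
    (sym_count S (nth (0, true) w i).1 == 1) ||
    (sym_count S (nth (0, true) w (i.+1 %% size w)).1 == 1).

Definition cata_flat_hex (S : scheme) : Prop :=
  [/\ connected_scheme S, flat S, hexagonal S & catacondensed S].

(* Occurrences (k, i) = i-th literal of the k-th word; corners (k, i) = the
   corner of the k-th polygon at which its i-th side starts (i.e. between
   sides i-1 and i). *)
Definition pos6 (S : scheme) : finType := ('I_(size S) * 'I_6)%type.

Definition lit (S : scheme) (o : pos6 S) : literal :=
  nth (0, true) (nth [::] S o.1) o.2.
Definition sym (S : scheme) (o : pos6 S) : nat := (lit S o).1.

(* Side o of its polygon runs from corner o to corner (next o).  The edge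
   labelled by its symbol runs from tailc o to headc o (reversed if the
   exponent is negative). *)
Definition nextc (S : scheme) (o : pos6 S) : pos6 S := (o.1, ordS o.2).
Definition tailc (S : scheme) (o : pos6 S) : pos6 S :=
  if (lit S o).2 then o else nextc S o.
Definition headc (S : scheme) (o : pos6 S) : pos6 S :=
  if (lit S o).2 then nextc S o else o.

Definition glue (S : scheme) : rel (pos6 S) := fun c d =>
  [exists o : pos6 S, exists o' : pos6 S,
     (sym S o == sym S o') &&
     (((tailc S o == c) && (tailc S o' == d)) || ((headc S o == c) && (headc S o' == d)))].

Definition samev (S : scheme) : rel (pos6 S) := connect (glue S).

Definition incident (S : scheme) (c : pos6 S) (a : nat) : bool :=
  [exists o : pos6 S, (sym S o == a) &&
     (samev S (tailc S o) c || samev S (headc S o) c)].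

Definition is_loop (S : scheme) (a : nat) : bool :=
  [exists o : pos6 S, (sym S o == a) && samev S (tailc S o) (headc S o)].

(* Kekulean: the skeleton graph (vertices = classes of corners, edges = symbols)
   has a perfect matching: a set M of edges, none a loop, such that every
   vertex is incident to exactly one edge of M. *)
Definition kekulean (S : scheme) : Prop :=
  exists M : seq nat,
    [/\ uniq M, {subset M <= syms S}, all (fun a => ~~ is_loop S a) M &
        forall c : pos6 S, count (incident S c) M = 1].

(* Flatness and catacondensation make the skeleton very concrete: a side of a hexagon is
   either free (its symbol occurs once) or shared with exactly one partner side, no two
   shared sides of a hexagon are adjacent, and hence every vertex is either a single corner
   or a pair of corners glued along a shared side (samevE).  The perfect matching is built
   hexagon by hexagon.  Shared sides are kept in the matching, except that every "para"
   hexagon (exactly two shared sides, opposite to each other) releases one of them, which is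
   then covered from both hexagons by free sides.  Choosing the released sides so that no
   shared edge is released twice amounts to a system of distinct representatives for a
   multigraph of maximum degree 2 (distinct_picks).  Given the resulting states of its six
   sides, a fixed local rule ([selected]) decides which free sides of a hexagon are matched;
   that it behaves correctly is checked exhaustively on all 4^6 configurations
   (admissible_locally_perfect).  Gluing these local facts along the shared sides shows that
   every vertex is covered exactly once and no loop is used (matching_perfect). *)

From HB Require Import structures.
From mathcomp Require Import all_boot zify.

(* A list L of pairs is a multigraph on T; [picks L C] says that C chooses one endpoint of
   each edge.  If every vertex has degree at most 2, the choice can be made injective. *)
Section DistinctRepresentatives.

Variable T : eqType.
Implicit Types (L : seq (T * T)) (C : seq T).

Definition ends L : seq T := flatten [seq [:: q.1; q.2] | q <- L].

Definition picks L C : bool := all2 (fun q c => (c == q.1) || (c == q.2)) L C.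

Lemma ends_cons q L : ends (q :: L) = q.1 :: q.2 :: ends L.
Proof. by []. Qed.

Lemma ends_cat L1 L2 : ends (L1 ++ L2) = ends L1 ++ ends L2.
Proof. by rewrite /ends map_cat flatten_cat. Qed.

Lemma picks_sub {L C} : picks L C -> {subset C <= ends L}.
Proof.
elim: L C => [|q L IH] [|c C] //= /andP[cq /IH CL] x.
rewrite inE mem_cat => /orP[/eqP ->|/CL ->]; last exact: orbT.
by rewrite !inE cq.
Qed.

Lemma picks_cat {L1 L2 C1 C2} :
  picks L1 C1 -> picks L2 C2 -> picks (L1 ++ L2) (C1 ++ C2).
Proof. by elim: L1 C1 => [|q L1 IH] [|c C1] //= /andP[-> /IH]. Qed.

Lemma picks_catl L1 L2 C : picks (L1 ++ L2) C ->
  exists C1 C2, [/\ C = C1 ++ C2, picks L1 C1 & picks L2 C2].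
Proof.
elim: L1 C => [|q L1 IH] C /=; first by exists [::], C.
case: C => [|c C] //= /andP[cq /IH[C1 [C2 [-> H1 H2]]]].
by exists (c :: C1), C2; rewrite /= cq H1.
Qed.

Lemma picks_nth {L C} q0 c0 i : picks L C -> i < size L ->
  (nth c0 C i == (nth q0 L i).1) || (nth c0 C i == (nth q0 L i).2).
Proof.
elim: L C i => [|q L IH] [|c C] // [|i] /andP[cq pLC] //=.
by rewrite ltnS; apply: IH.
Qed.

Lemma picks_size {L C} : picks L C -> size C = size L.
Proof. by elim: L C => [|q L IH] [|c C] //= /andP[_ /IH ->]. Qed.

(* The path y - x - z (edges (x, y) and q = {x, z}) was contracted to the edge (y, z); an
   injective choice for the contracted multigraph avoiding x extends to the original one,
   by giving to the two edges through x the vertex x and the vertex chosen for (y, z). *)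
Lemma picks_expand {x y z q L1 L2 C} :
  x \in [:: q.1; q.2] -> z \in [:: q.1; q.2] ->
  picks ((y, z) :: L1 ++ L2) C -> uniq C -> x \notin C ->
  exists2 C', picks ((x, y) :: L1 ++ q :: L2) C' & uniq C'.
Proof.
move=> xq zq; case: C => [|c0 C] //.
rewrite [picks _ _]/= => /andP[c0yz /picks_catl[C1 [C2 [-> H1 H2]]]] uC xNC.
have [a [b [axy bq ab]]] : exists a b,
    [/\ (a == x) || (a == y), b \in [:: q.1; q.2] & perm_eq [:: a; b] [:: x; c0]].
  have [->|c0y] := eqVneq c0 y.
    by exists y, x; rewrite eqxx orbT xq -(perm_rot 1 [:: y; x]) perm_refl.
  exists x, c0; move: c0yz; rewrite (negbTE c0y) /= => /eqP ->.
  by rewrite eqxx zq perm_refl.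
exists (a :: C1 ++ b :: C2).
  have H2' : picks (q :: L2) (b :: C2) by move: bq; rewrite /picks /= !inE => ->.
  by rewrite /picks /= axy; apply: (picks_cat H1 H2').
rewrite (perm_uniq (_ : perm_eq _ (x :: c0 :: C1 ++ C2))) /= ?xNC //.
apply: (perm_trans (_ : perm_eq _ ([:: a; b] ++ C1 ++ C2))).
  by rewrite /= perm_cons -[b :: C2]/([:: b] ++ C2) perm_catCA.
by rewrite -[x :: _]/([:: x; c0] ++ C1 ++ C2) perm_cat2r.
Qed.

(* By induction on the number of edges: take an edge (x, y); if x has no other edge,
   choose x; otherwise contract the path through x as in picks_expand. *)
Lemma distinct_picks L :
  (forall a, count_mem a (ends L) <= 2) -> exists2 C, picks L C & uniq C.
Proof.
have [n] := ubnP (size L); elim: n L => // n IH [|[x y] L] ltLn deg2.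
  by exists [::].
have [xL|xNL] := boolP (x \in ends L); last first.
  have [a|C pLC uC] := IH L ltLn.
    by apply: leq_trans (deg2 a); rewrite ends_cons /= addnA leq_addl.
  exists (x :: C); first by rewrite /picks /= eqxx.
  by rewrite /= uC andbT; apply: contra xNL; apply: picks_sub.
have /flatten_mapP[q qL xq] := xL.
case/splitPr: qL ltLn deg2 => L1 L2 ltLn deg2.
set z := if q.1 == x then q.2 else q.1.
have zq : z \in [:: q.1; q.2] by rewrite /z !inE; case: ifP; rewrite eqxx ?orbT.
have q_xz a : count_mem a [:: q.1; q.2] = count_mem a [:: x; z].
  rewrite /z; case: eqP => [<-|/eqP ne1] //.
  by move: xq; rewrite !inE eq_sym (negbTE ne1) /= => /eqP ->; rewrite addnCA.
set R := (y, z) :: L1 ++ L2.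
have degR a : count_mem a (ends ((x, y) :: L1 ++ q :: L2)) =
              count_mem a (ends R) + (x == a).*2.
  rewrite !ends_cons !ends_cat ends_cons /= !count_cat.
  by have /= := q_xz a; lia.
have [|a|C pRC uC] := IH R.
- by move: ltLn; rewrite /R /= !size_cat /=; lia.
- by have := deg2 a; rewrite degR; lia.
apply: (picks_expand xq zq pRC uC); apply/negP => /(picks_sub pRC) xR.
by move: xR (deg2 x); rewrite degR eqxx -has_pred1 has_count; lia.
Qed.

End DistinctRepresentatives.

Arguments ends {T}.
Arguments picks {T}.
Arguments picks_nth {T L C}.
Arguments picks_size {T L C}.
Arguments distinct_picks {T}.

(* The state of a side of a hexagon: free, or shared and then released by this hexagon,
   released by the neighbouring hexagon (ceded), or kept in the matching. *)
Inductive side_state := Free | Released | Ceded | Kept.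

Definition state_eqb (x y : side_state) : bool :=
  match x, y with
  | Free, Free | Released, Released | Ceded, Ceded | Kept, Kept => true
  | _, _ => false
  end.

Lemma state_eqP : Equality.axiom state_eqb.
Proof. by case; case; constructor. Qed.

HB.instance Definition _ := hasDecEq.Build side_state state_eqP.

(* The state of a shared side as seen from the neighbouring hexagon. *)
Definition opposite (x : side_state) : side_state :=
  match x with Released => Ceded | Ceded => Released | y => y end.

Lemma opposite_kept x : (opposite x == Kept) = (x == Kept).
Proof. by case: x. Qed.

(* A hexagon is described by the states of its six sides, read cyclically. *)
Definition at6 (s : seq side_state) (i : nat) : side_state := nth Free s (i %% 6).
Definition shared_at (s : seq side_state) (i : nat) : bool := at6 s i != Free.

Definition para (g : seq bool) : bool :=
  (count id g == 2) && has (fun i => nth false g i && nth false g (i + 3)) (iota 0 3).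

Lemma para_opposite g : size g = 6 -> para g ->
  [&& find id g < 3, nth false g (find id g) & nth false g (find id g + 3)].
Proof. by case: g => [|[] [|[] [|[] [|[] [|[] [|[] [|]]]]]]]. Qed.

Definition selected (s : seq side_state) (i : nat) : bool :=
  match at6 s i with
  | Free =>
      if shared_at s (i + 5) || shared_at s (i + 1) then
        (at6 s (i + 5) == Released) || (at6 s (i + 1) == Released)
      else ~~ shared_at s (i + 3) && (has (fun x => x != Free) s || ~~ odd (i %% 6))
  | Kept => true
  | _ => false
  end.

Lemma selected_mod s i : selected s (i %% 6) = selected s i.
Proof. by rewrite /selected /shared_at /at6 !modnDml !modn_mod. Qed.

Definition admissible (s : seq side_state) : bool :=
  all (fun i => ~~ (shared_at s i && shared_at s (i + 1))) (iota 0 6) &&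
  (count_mem Released s == para [seq x != Free | x <- s]).

(* What the rule achieves at side i: the corner between two free sides is covered by
   exactly one of them; the two free sides next to a shared side are matched iff it is
   released, the shared side itself iff it is kept; a matched free side never joins two
   shared sides (this excludes loops). *)
Definition locally_perfect (s : seq side_state) : bool :=
  all (fun i =>
    [&& ~~ shared_at s (i + 5) && ~~ shared_at s i ==> selected s i (+) selected s (i + 5),
        shared_at s i ==> [&& selected s i == (at6 s i == Kept),
                              selected s (i + 5) == (at6 s i == Released) &
                              selected s (i + 1) == (at6 s i == Released)] &
        ~~ shared_at s i && selected s i ==> ~~ (shared_at s (i + 5) && shared_at s (i + 1))])
    (iota 0 6).

Definition all_states : seq side_state := [:: Free; Released; Ceded; Kept].

Lemma mem_all_states x : x \in all_states.
Proof. by case: x; rewrite !inE eqxx ?orbT. Qed.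

Definition configs (n : nat) : seq (seq side_state) :=
  iter n (allpairs cons all_states) [:: [::]].

Lemma configsP s : s \in configs (size s).
Proof. by elim: s => [|x s IH] //=; apply: allpairs_f (mem_all_states x) IH. Qed.

Lemma locally_perfect_configs :
  all (fun s => admissible s ==> locally_perfect s) (configs 6).
Proof. by vm_compute. Qed.

Lemma admissible_locally_perfect s :
  size s = 6 -> admissible s -> locally_perfect s.
Proof.
move=> s6; apply/implyP; move: (configsP s); rewrite s6.
exact: (allP locally_perfect_configs).
Qed.

Section CataFlatHex.

Variable S : scheme.
Hypotheses (hexS : hexagonal S) (flatS : flat S) (cataS : catacondensed S).
Implicit Types o c : pos6 S.

Definition prevc c : pos6 S := (c.1, ord_pred c.2).

Definition touches o c : bool := (c == o) || (c == nextc S o).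

Lemma prevcK c : nextc S (prevc c) = c.
Proof. by case: c => k i; rewrite /nextc /prevc /= ord_predK. Qed.

Lemma nextcK c : prevc (nextc S c) = c.
Proof. by case: c => k i; rewrite /nextc /prevc /= ordSK. Qed.

Lemma nextc_neq c : nextc S c != c.
Proof.
case: c => k [i lti6]; rewrite /nextc xpair_eqE eqxx /= -val_eqE /=.
by move: lti6; case: i => [|[|[|[|[|[|]]]]]].
Qed.

Lemma nextc_mod6 o : nextc S o = (o.1, inord ((o.2 + 1) %% 6)).
Proof.
by case: o => k i; congr (_, _); apply: val_inj; rewrite /= inordK ?ltn_pmod // addn1.
Qed.

Lemma prevc_mod6 o : prevc o = (o.1, inord ((o.2 + 5) %% 6)).
Proof.
by case: o => k i; congr (_, _); apply: val_inj; rewrite /= inordK ?ltn_pmod // addnS.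
Qed.

Lemma inord_mod6 (i : 'I_6) : inord (i %% 6) = i.
Proof. by rewrite modn_small // inord_val. Qed.

Lemma touchesE o c : touches o c = (o == c) || (o == prevc c).
Proof.
rewrite /touches eq_sym; congr (_ || _).
by apply/eqP/eqP => [->|->]; rewrite ?nextcK ?prevcK.
Qed.

Lemma touches_ends o :
  [/\ touches o (tailc S o), touches o (headc S o) & tailc S o != headc S o].
Proof.
rewrite /touches /tailc /headc; case: (lit S o).2; rewrite !eqxx ?orbT //.
  by rewrite eq_sym nextc_neq.
by rewrite nextc_neq.
Qed.

Lemma touchesP {o c} : touches o c -> c = tailc S o \/ c = headc S o.
Proof.
rewrite /touches /tailc /headc => /orP[] /eqP ->.
  by case: (lit S o).2; [left | right].
by case: (lit S o).2; [right | left].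
Qed.

Lemma word_size (k : 'I_(size S)) : size (nth [::] S k) = 6.
Proof. by apply/eqP/(allP hexS)/mem_nth. Qed.

Lemma sym_count_sum a :
  sym_count S a = \sum_(k < size S) \sum_(i < 6) (sym S (k, i) == a).
Proof.
rewrite /sym_count sumnE big_map (big_nth [::]) big_mkord; apply: eq_bigr => k _.
rewrite -sum1_count (big_nth (0, true)) word_size big_mkord big_mkcond /=.
by apply: eq_big => // i _; case: eqP.
Qed.

Lemma sym_count_card a : sym_count S a = #|[pred o : pos6 S | sym S o == a]|.
Proof.
rewrite sym_count_sum pair_big -sum1_card [RHS]big_mkcond /=.
by apply: eq_bigr => -[k i] _; rewrite inE; case: eqP.
Qed.

Definition glued o : bool := sym_count S (sym S o) == 2.

Definition partner o : pos6 S :=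
  odflt o [pick o' : pos6 S | (o' != o) && (sym S o' == sym S o)].

Lemma glued_sym {o o'} : sym S o' = sym S o -> glued o' = glued o.
Proof. by rewrite /glued => ->. Qed.

Lemma glued_twin {o o'} : o' != o -> sym S o' = sym S o -> glued o.
Proof.
move=> neq eqs; rewrite /glued eqn_leq flatS sym_count_card.
by apply/card_gt1P; exists o, o'; rewrite !inE eqs eqxx eq_sym.
Qed.

Lemma unglued_unique {o o'} : ~~ glued o -> sym S o' = sym S o -> o' = o.
Proof.
by move=> ng eqs; apply/eqP; apply: contraNT ng => neq; apply: glued_twin neq eqs.
Qed.

Lemma partner_spec {o} : glued o -> partner o != o /\ sym S (partner o) = sym S o.
Proof.
rewrite /partner; case: pickP => [o' /andP[neq /eqP eqs] //|none].
rewrite /glued sym_count_card (cardD1 o) inE eqxx.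
by rewrite (eq_card0 (A := [predD1 _ & o])) // => o' /=; rewrite andbC none.
Qed.

Lemma partner_unique {o o'} : glued o -> o' != o -> sym S o' = sym S o -> o' = partner o.
Proof.
move=> go neq eqs; have [pneq peqs] := partner_spec go.
apply/eqP; apply: contraT => neqp.
suff : 2 < #|[pred x : pos6 S | sym S x == sym S o]|.
  by rewrite ltnNge -sym_count_card flatS.
apply/card_gt2P; exists o, o', (partner o); rewrite !inE eqs peqs eqxx.
by rewrite eq_sym neq neqp pneq.
Qed.

Lemma glued_partner {o} : glued o -> glued (partner o).
Proof. by move=> go; rewrite (glued_sym (proj2 (partner_spec go))). Qed.

Lemma partnerK {o} : glued o -> partner (partner o) = o.
Proof.
move=> go; have [pneq peqs] := partner_spec go.
by symmetry; apply: partner_unique; rewrite ?glued_partner // eq_sym.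
Qed.

(* Catacondensation: consecutive sides are never both shared. *)
Lemma glued_next {o} : glued o -> glued (nextc S o) = false.
Proof.
case: o => k i; have := cataS _ (mem_nth [::] (ltn_ord k)) i.
rewrite word_size // => /(_ (ltn_ord i)).
by rewrite /glued /sym /lit /nextc /=; case/orP => /eqP -> //= /eqP.
Qed.

Lemma glued_prev {c} : glued (prevc c) -> glued c = false.
Proof. by move=> /glued_next; rewrite prevcK. Qed.

(* Hence a corner lies on at most one shared side: at a glued corner, gside is the shared
   side and fside the free side through it, and mate is the corner it is glued to. *)
Definition gcorner c : bool := glued c || glued (prevc c).
Definition gside c : pos6 S := if glued c then c else prevc c.
Definition fside c : pos6 S := if glued c then prevc c else c.

Definition mate c : pos6 S :=
  if gcorner c then
    if c == tailc S (gside c) then tailc S (partner (gside c))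
    else headc S (partner (gside c))
  else c.

Lemma gside_touch {o c} : glued o -> touches o c -> gcorner c /\ gside c = o.
Proof.
move=> go; rewrite touchesE => /orP[] /eqP E; subst o; first by rewrite /gcorner /gside go.
by rewrite /gcorner /gside go orbT (glued_prev go).
Qed.

Lemma gside_spec {c} : gcorner c -> glued (gside c) /\ touches (gside c) c.
Proof.
by rewrite /gcorner /gside touchesE; case: ifP => [->|_ /= ->]; rewrite !eqxx ?orbT.
Qed.

Lemma fside_adjacent c : fside c = prevc (gside c) \/ fside c = nextc S (gside c).
Proof. by rewrite /fside /gside; case: ifP => _; [left | right; rewrite prevcK]. Qed.

Lemma fside_touch c : touches (fside c) c.
Proof. by rewrite touchesE /fside; case: ifP; rewrite eqxx ?orbT. Qed.

Lemma touch_sides {x c} : touches x c -> x = gside c \/ x = fside c.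
Proof.
by rewrite touchesE /gside /fside => /orP[] /eqP ->; case: ifP; [left|right|right|left].
Qed.

Lemma mate_spec {c} : gcorner c ->
  [/\ gcorner (mate c), gside (mate c) = partner (gside c) & mate (mate c) = c].
Proof.
move=> gc; have [gg tg] := gside_spec gc; set g := gside c in gg tg *.
have tg' : touches (partner g) (mate c).
  by rewrite /mate gc -/g; case: ifP => _; case: (touches_ends (partner g)).
have [gc' gs'] := gside_touch (glued_partner gg) tg'.
split => //; rewrite {1}/mate gc' gs' partnerK // /mate gc -/g.
have [->|neq] := eqVneq c (tailc S g); first by rewrite !eqxx.
have [_ _ th] := touches_ends (partner g); rewrite eq_sym (negbTE th).
by case: (touchesP tg) => // E; rewrite E eqxx in neq.
Qed.

Lemma glue_mate {c} : gcorner c -> glue S c (mate c).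
Proof.
move=> gc; have [gg tg] := gside_spec gc.
apply/existsP; exists (gside c); apply/existsP; exists (partner (gside c)).
rewrite (proj2 (partner_spec gg)) eqxx /= /mate gc.
move: (gside c) gg tg => g gg tg.
have [->|neq] := eqVneq c (tailc S g); first by rewrite !eqxx.
case: (touchesP tg) => E; first by rewrite E eqxx in neq.
by rewrite E !eqxx orbT.
Qed.

Lemma glue_cases {c e} : glue S c e -> e = c \/ (gcorner c /\ e = mate c).
Proof.
move=> /existsP[o /existsP[o' /andP[/eqP/esym eqs ends]]].
have [Eo|neq] := eqVneq o' o.
  by left; subst o'; case/orP: ends => /andP[/eqP <- /eqP <-].
have go := glued_twin neq eqs; have o'E := partner_unique go neq eqs.
have [t1 t2 th] := touches_ends o; right.
case/orP: ends => /andP[/eqP Ec /eqP Ee].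
- have [gc gs] : gcorner c /\ gside c = o by apply: gside_touch go _; rewrite -Ec.
  by rewrite /mate gc gs -Ec eqxx -o'E Ee.
- have [gc gs] : gcorner c /\ gside c = o by apply: gside_touch go _; rewrite -Ec.
  by rewrite /mate gc gs -Ec -o'E Ee eq_sym (negbTE th).
Qed.

(* The vertices of the skeleton: each corner is glued at most to its mate. *)
Definition same_vertex c e : bool := (e == c) || (gcorner c && (e == mate c)).

Lemma same_vertex_sym {c e} : same_vertex c e -> same_vertex e c.
Proof.
move=> /orP[/eqP ->|/andP[gc /eqP ->]]; first by rewrite /same_vertex eqxx.
by have [gc' _ mm] := mate_spec gc; rewrite /same_vertex gc' mm eqxx orbT.
Qed.

Lemma same_vertex_trans {c d e} : same_vertex c d -> same_vertex d e -> same_vertex c e.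
Proof.
move=> /orP[/eqP ->|/andP[gc /eqP ->]] // /orP[/eqP ->|/andP[_ /eqP ->]].
  by rewrite /same_vertex gc eqxx orbT.
by have [_ _ ->] := mate_spec gc; rewrite /same_vertex eqxx.
Qed.

Lemma samevE c e : samev S c e = same_vertex c e.
Proof.
apply/idP/idP => [/connectP[p gp ->]|/orP[/eqP ->|/andP[gc /eqP ->]]].
- elim: p c gp => [|x p IH] c /=; first by rewrite /same_vertex eqxx.
  move=> /andP[gcx /IH]; apply: same_vertex_trans.
  by case: (glue_cases gcx) => [->|[gc ->]]; rewrite /same_vertex ?gc eqxx ?orbT.
- exact: connect0.
- exact/connect1/glue_mate.
Qed.

Lemma incidentP c b :
  reflect (exists x e, [/\ sym S x = b, touches x e & same_vertex c e]) (incident S c b).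
Proof.
apply: (iffP existsP) => [[o /andP[/eqP <- ends]]|[x [e [<- txe vce]]]].
  have [t1 t2 _] := touches_ends o; rewrite !samevE in ends.
  by case/orP: ends => /same_vertex_sym; [exists o, (tailc S o) | exists o, (headc S o)].
have vec : samev S e c by rewrite samevE same_vertex_sym.
by exists x; rewrite eqxx; case: (touchesP txe) => <-; rewrite vec ?orbT.
Qed.

Definition shared_pattern (k : 'I_(size S)) : seq bool :=
  mkseq (fun i => glued (k, inord i)) 6.

Definition para_hex k : bool := para (shared_pattern k).

Definition pside k : 'I_6 := inord (find id (shared_pattern k)).
Definition qside k : 'I_6 := inord (find id (shared_pattern k) + 3).

Definition para_hexes : seq 'I_(size S) := [seq k <- enum 'I_(size S) | para_hex k].

Definition para_pairs : seq (nat * nat) :=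
  [seq (sym S (k, pside k), sym S (k, qside k)) | k <- para_hexes].

Lemma mem_para_hexes k : (k \in para_hexes) = para_hex k.
Proof. by rewrite mem_filter mem_enum andbT. Qed.

Lemma para_sides {k} : para_hex k ->
  [/\ qside k = pside k + 3 :> nat, glued (k, pside k) & glued (k, qside k)].
Proof.
move=> /(para_opposite _ (size_mkseq _ _)); rewrite -/(shared_pattern k).
move=> /and3P[lt3]; have lt6 : find id (shared_pattern k) + 3 < 6 by lia.
by rewrite /pside /qside !nth_mkseq ?inordK //; lia.
Qed.

(* By flatness, a symbol is a side of at most two para hexagons. *)
Lemma para_pairs_degree a : count_mem a (ends para_pairs) <= 2.
Proof.
apply: leq_trans (flatS a); rewrite sym_count_sum.
rewrite /ends /para_pairs count_flatten -!map_comp sumnE big_map big_filter.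
rewrite big_enum_cond big_mkcond /=; apply: leq_sum => k _; case: ifP => // pk.
have [pq _ _] := para_sides pk.
have neq : qside k != pside k by rewrite -val_eqE /= pq; lia.
by rewrite (bigD1 (pside k)) // (bigD1 (qside k)) //= addn0 addnA leq_addr.
Qed.

(* Given an injective choice C of released sides, the matching is defined locally. *)
Section Labelling.

Variable C : seq nat.
Hypotheses (pickC : picks para_pairs C) (uniqC : uniq C).

Definition released_side k : 'I_6 :=
  if nth 0 C (index k para_hexes) == sym S (k, pside k) then pside k else qside k.

Definition released o : bool := para_hex o.1 && (o.2 == released_side o.1).

Definition state o : side_state :=
  if ~~ glued o then Free
  else if released o then Released
  else if released (partner o) then Ceded
  else Kept.

Definition config k : seq side_state := mkseq (fun i => state (k, inord i)) 6.

Definition chosen o : bool := selected (config o.1) o.2.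

Lemma sym_released k :
  para_hex k -> sym S (k, released_side k) = nth 0 C (index k para_hexes).
Proof.
move=> pk; have kP : index k para_hexes < size para_pairs.
  by rewrite size_map index_mem mem_para_hexes.
have := picks_nth (0, 0) 0 _ pickC kP.
rewrite (nth_map k) -?(size_map (fun k => (sym S (k, pside k), sym S (k, qside k)))) //.
rewrite nth_index ?mem_para_hexes //= /released_side.
by case: eqP => [-> //|_ /= /eqP ->].
Qed.

Lemma released_glued {o} : released o -> glued o.
Proof.
case: o => k i /andP[pk /eqP /= ->]; have [_ gp gq] := para_sides pk.
by rewrite /released_side; case: ifP.
Qed.

Lemma released_inj {o o'} : released o -> released o' -> sym S o = sym S o' -> o = o'.
Proof.
case: o o' => k i [k' i'] /andP[pk /eqP /= ->] /andP[pk' /eqP /= ->].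
rewrite !sym_released // => /eqP.
rewrite nth_uniq // ?(picks_size pickC) ?size_map ?index_mem ?mem_para_hexes //.
by move=> /eqP /(congr1 (nth k para_hexes)); rewrite !nth_index ?mem_para_hexes // => ->.
Qed.

Lemma state_free o : (state o == Free) = ~~ glued o.
Proof. by rewrite /state; case: (glued o) (released o) (released (partner o)) => [] [] []. Qed.

Lemma state_released o : (state o == Released) = released o.
Proof.
rewrite /state; case ro: (released o); first by rewrite (released_glued ro).
by case: (glued o) => //=; case: ifP.
Qed.

Lemma state_partner {o} : glued o -> state (partner o) = opposite (state o).
Proof.
move=> go; have [neq eqs] := partner_spec go.
rewrite /state glued_partner // go partnerK //=.
case ro: (released o); case rp: (released (partner o)) => //.
by move: neq; rewrite (released_inj rp ro eqs) eqxx.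
Qed.

Lemma at6_config k j : at6 (config k) j = state (k, inord (j %% 6)).
Proof. by rewrite /at6 /config nth_mkseq // ltn_pmod. Qed.

Lemma shared_at_config k j : shared_at (config k) j = glued (k, inord (j %% 6)).
Proof. by rewrite /shared_at at6_config state_free negbK. Qed.

Lemma chosen_config k j : selected (config k) j = chosen (k, inord (j %% 6)).
Proof. by rewrite /chosen /= inordK ?ltn_pmod // selected_mod. Qed.

Lemma config_admissible k : admissible (config k).
Proof.
apply/andP; split.
  apply/allP => i; rewrite mem_iota => /andP[_ lti6].
  rewrite !shared_at_config (modn_small lti6).
  have := nextc_mod6 (k, inord i); rewrite /= inordK // => <-.
  by apply/negP => /andP[/glued_next ->].
have -> : [seq x != Free | x <- config k] = shared_pattern k.
  by rewrite -map_comp; apply: eq_map => i /=; rewrite state_free negbK.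
rewrite /config /mkseq count_map -/(para_hex k).
rewrite (@eq_in_count _ _ (fun i : nat => para_hex k && (i == released_side k))); last first.
  move=> i; rewrite mem_iota => /andP[_ lti6] /=.
  by rewrite state_released /released -val_eqE /= inordK.
case: (para_hex k) => //=.
have := count_uniq_mem (released_side k : nat) (iota_uniq 0 6).
by rewrite mem_iota leq0n add0n ltn_ord => E; apply/eqP; exact: E.
Qed.

(* The exhaustive local check, transported to the sides of the complex. *)
Lemma side_facts o :
  [/\ ~~ glued (prevc o) && ~~ glued o ==> chosen o (+) chosen (prevc o),
      glued o ==> [&& chosen o == (state o == Kept),
                     chosen (prevc o) == (state o == Released) &
                     chosen (nextc S o) == (state o == Released)] &
      ~~ glued o && chosen o ==> ~~ (glued (prevc o) && glued (nextc S o))].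
Proof.
case: o => k i.
have /allP/(_ i) := admissible_locally_perfect _ (size_mkseq _ 6) (config_admissible k).
rewrite mem_iota ltn_ord => /(_ isT) /and3P[].
rewrite !shared_at_config !chosen_config !at6_config inord_mod6.
by rewrite -(prevc_mod6 (k, i)) -(nextc_mod6 (k, i)); split.
Qed.

Lemma chosen_glued {o} : glued o -> chosen o = (state o == Kept).
Proof. by move=> go; have [_ /implyP/(_ go)/and3P[/eqP] //] := side_facts o. Qed.

Lemma chosen_partner {o} : glued o -> chosen (partner o) = chosen o.
Proof.
move=> go; rewrite !chosen_glued ?glued_partner //.
by rewrite state_partner // opposite_kept.
Qed.

Lemma chosen_fside {c} : gcorner c -> chosen (fside c) = (state (gside c) == Released).
Proof.
move=> gc; have [gg _] := gside_spec gc.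
have [_ /implyP/(_ gg)/and3P[_ /eqP cp /eqP cn] _] := side_facts (gside c).
by case: (fside_adjacent c) => ->.
Qed.

Lemma chosen_fside_mate {c} : gcorner c ->
  chosen (fside (mate c)) = (state (gside c) == Ceded).
Proof.
move=> gc; have [gg _] := gside_spec gc; have [gc' gs' _] := mate_spec gc.
by rewrite chosen_fside // gs' state_partner //; case: (state (gside c)).
Qed.

Lemma chosen_sym {x y} : sym S x = sym S y -> chosen y -> chosen x.
Proof.
move=> eqs cy; have [gx|ngx] := boolP (glued x).
  have [Eyx|neq] := eqVneq y x; first by rewrite -Eyx.
  by move: cy; rewrite (partner_unique gx neq (esym eqs)) chosen_partner.
by rewrite -(unglued_unique ngx (esym eqs)).
Qed.

Definition matched_side c : pos6 S :=
  if gcorner c then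
    match state (gside c) with
    | Released => fside c
    | Ceded => fside (mate c)
    | _ => gside c
    end
  else if chosen c then c else prevc c.

Lemma free_corner_xor {c} : ~~ gcorner c -> chosen c (+) chosen (prevc c).
Proof.
have [/implyP + _ _] := side_facts c.
by rewrite /gcorner negb_or andbC => /[apply]; rewrite addbC.
Qed.

Lemma matched_side_spec c : chosen (matched_side c) /\ incident S c (sym S (matched_side c)).
Proof.
have incid x e : touches x e -> same_vertex c e -> incident S c (sym S x).
  by move=> txe vce; apply/incidentP; exists x, e.
have vcc : same_vertex c c by rewrite /same_vertex eqxx.
rewrite /matched_side; case: ifPn => [gc|ngc].
  have [gg tg] := gside_spec gc.
  have vcm : same_vertex c (mate c) by rewrite /same_vertex gc eqxx orbT.
  have nfree : state (gside c) != Free by rewrite state_free gg.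
  case: (state (gside c)) nfree
    (chosen_fside gc) (chosen_fside_mate gc) (chosen_glued gg) => //.
  - by move=> _ cf _ _; split; [rewrite cf | apply: incid (fside_touch c) vcc].
  - by move=> _ _ cf _; split; [rewrite cf | apply: incid (fside_touch (mate c)) vcm].
  - by move=> _ _ _ cg; split; [rewrite cg | apply: incid tg vcc].
have xor := free_corner_xor ngc; case: ifP => cc.
  by split => //; apply: incid vcc; rewrite /touches eqxx.
split; first by move: xor; rewrite cc.
by apply: incid vcc; rewrite touchesE eqxx orbT.
Qed.

Lemma matched_side_unique c x e : chosen x -> touches x e -> same_vertex c e ->
  sym S x = sym S (matched_side c).
Proof.
move=> cx txe; rewrite /same_vertex /matched_side; case: ifPn => [gc|ngc] vce; last first.
  move: vce; rewrite orbF => /eqP Ee; subst e.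
  have xor := free_corner_xor ngc; congr (sym S _).
  move: txe; rewrite touchesE => /orP[] /eqP Ex; subst x; first by rewrite cx.
  by move: xor; rewrite cx; case: (chosen c).
have [gg _] := gside_spec gc; have [_ gs' _] := mate_spec gc.
have : [\/ x = gside c, x = fside c, x = partner (gside c) | x = fside (mate c)].
  case/orP: vce => /eqP Ee; subst e; case: (touch_sides txe) => ->; rewrite ?gs';
    [exact: Or41 | exact: Or42 | exact: Or43 | exact: Or44].
have nfree : state (gside c) != Free by rewrite state_free gg.
case=> Ex; subst x; move: cx; rewrite ?chosen_partner ?(proj2 (partner_spec gg)) //.
- by rewrite chosen_glued //; case: (state (gside c)) nfree.
- by rewrite chosen_fside //; case: (state (gside c)) nfree.
- by rewrite chosen_glued //; case: (state (gside c)) nfree.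
- by rewrite chosen_fside_mate //; case: (state (gside c)) nfree.
Qed.

Definition matching : seq nat := undup [seq sym S o | o <- enum (pos6 S) & chosen o].

Lemma matchingP b : reflect (exists2 y, chosen y & sym S y = b) (b \in matching).
Proof.
rewrite mem_undup; apply: (iffP mapP) => [[y]|[y cy <-]].
  by rewrite mem_filter => /andP[cy _] ->; exists y.
by exists y; rewrite // mem_filter cy mem_enum.
Qed.

Lemma matching_incident c : count (incident S c) matching = 1.
Proof.
have [cm im] := matched_side_spec c.
have mm : sym S (matched_side c) \in matching by apply/matchingP; exists (matched_side c).
rewrite (@eq_in_count _ _ (pred1 (sym S (matched_side c)))).
  by rewrite count_uniq_mem ?undup_uniq // mm.
move=> b /matchingP[y cy <-] /=; apply/idP/eqP => [/incidentP[x [e [eqs txe vce]]]|->] //.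
by rewrite -eqs; apply: matched_side_unique txe vce; apply: chosen_sym cy.
Qed.

(* A loop would be a side whose two ends are glued: for a shared side the two ends would
   have the same shared side and its partner, for a free one side_facts forbids it. *)
Lemma chosen_not_loop y : chosen y -> ~~ is_loop S (sym S y).
Proof.
move=> cy; apply/existsP => -[o /andP[/eqP eqs]]; rewrite samevE.
have co : chosen o := chosen_sym eqs cy.
have [t1 t2 th] := touches_ends o.
case/orP => [/eqP Eth|/andP[gc /eqP Ehm]]; first by rewrite Eth eqxx in th.
have [gc' gs' _] := mate_spec gc; rewrite -Ehm in gc' gs'.
have [go|ngo] := boolP (glued o).
  have [_ gst] := gside_touch go t1; have [_ gsh] := gside_touch go t2.
  rewrite gst gsh in gs'; have [+ _] := partner_spec go.
  by rewrite -gs' eqxx.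
have [_ _ /implyP/(_ _)] := side_facts o; rewrite ngo co => /(_ isT).
move: gc gc'; rewrite /tailc /headc.
by case: (lit S o).2; rewrite /gcorner nextcK (negbTE ngo) /= ?orbF => -> ->.
Qed.

Lemma sym_in_syms y : sym S y \in syms S.
Proof.
apply/flatten_mapP; exists (nth [::] S y.1); first exact: mem_nth.
by apply: map_f; apply: mem_nth; rewrite word_size.
Qed.

Lemma matching_perfect :
  [/\ uniq matching, {subset matching <= syms S},
      all (fun a => ~~ is_loop S a) matching &
      forall c, count (incident S c) matching = 1].
Proof.
split; [exact: undup_uniq | | | exact: matching_incident].
  by move=> b /matchingP[y _ <-]; apply: sym_in_syms.
by apply/allP => b /matchingP[y cy <-]; apply: chosen_not_loop.
Qed.

End Labelling.

End CataFlatHex.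

Theorem mainTheorem1 (S : scheme) : cata_flat_hex S -> kekulean S.
Proof.
case=> _ flatS hexS cataS.
(* Release one shared side of every para hexagon, never an edge from both sides. *)
have [C pickC uniqC] := distinct_picks (para_pairs S) (para_pairs_degree S hexS flatS).
exists (matching S C).
by apply: matching_perfect.
Qed.
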